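(* For any index $\mathbf{k}$, the element $w_{\hbar}^{\mathcal{S}, \ast}(g_{\mathbf{k}})$ belongs to the $\mathbb{Z}$-submodule $\bigoplus_{\mathbf{l} \in I_{0}}\mathbb{Z}\,g_{\mathbf{l}}$ of $\mathcal C\langle A\rangle$, where $I_0$ is the set of admissible indices.
   Context: Indices: an index is a finite (possibly empty) tuple $\mathbf k=(k_1,\dots,k_r)$ of positive integers; admissible if empty or $k_r\ge2$. Let $\mathcal{C}=\mathbb{Q}[\hbar]$ ($\hbar$ formal), $\mathfrak{H}=\mathcal{C}\langle a,b\rangle$. For $k\ge1$, $g_k=ba^k$; $g_{\mathbf k}=g_{k_1}\cdots g_{k_r}$, $g_\varnothing=1$. $A=\{\hbar b\}\cup\{ba^k\mid k\ge1\}$, $\mathcal{C}\langle A\rangle$ the $\mathcal{C}$-subalgebra generated by $1$ and $A$, $\mathfrak z$ the $\mathcal C$-span of $A$. Harmonic product: $\circ_\hbar$ symmetric $\mathcal C$-bilinear on $\mathfrak z$ with $(\hbar b)\circ_\hbar(\hbar b)=\hbar\cdot\hbar b$, $(\hbar b)\circ_\hbar g_k=\hbar g_k$, $g_k\circ_\hbar g_l=g_{k+l}$; $\ast_\hbar$ on $\mathcal{C}\langle A\rangle$: $w\ast_\hbar1=1\ast_\hbar w=w$, $(wu)\ast_\hbar(w'v)=(w\ast_\hbar w'v)u+(wu\ast_\hbar w')v+(w\ast_\hbar w')(u\circ_\hbar v)$ ($u,v\in A$). $\psi^\ast$ is the $\mathcal C$-algebra anti-involution of $\mathcal C\langle A\rangle$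 with $\psi^\ast(\hbar b)=\hbar b$, $\psi^\ast(ba^k)=b(-a)^k$ ($k\ge1$). $w^{\mathcal S,\ast}_\hbar$ is the $\mathcal C$-linear map with $w^{\mathcal S,\ast}_\hbar(1)=1$, $w^{\mathcal S,\ast}_\hbar(u_1\cdots u_r)=\sum_{i=0}^r(u_1\cdots u_i)\ast_\hbar\psi^\ast(u_{i+1}\cdots u_r)$ for $u_j\in A$. *)

From mathcomp Require Import all_boot all_order all_algebra.
Set Implicit Arguments. Unset Strict Implicit. Unset Printing Implicit Defensive.
Import Order.TTheory GRing.Theory Num.Theory.
Local Open Scope ring_scope.

Definition C := {poly rat}.
Definition hbar : C := 'X.

(* Letters of the alphabet A: 0 stands for hbar*b, k >= 1 stands for g_k = b a^k. *)
Definition letter := nat.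
Definition Aword := seq letter.
(* Elements of C<A> as formal finite C-linear combinations of A-words
   (C<A> is freely generated by A as a C-algebra). *)
Definition Aelt := seq (C * Aword).

Definition scaleA (c : C) (x : Aelt) : Aelt := [seq (c * p.1, p.2) | p <- x].

Definition circ (u v : letter) : C * letter :=
  match u, v with
  | 0%N, 0%N => (hbar, 0%N)
  | 0%N, l => (hbar, l)
  | k, 0%N => (hbar, k)
  | k, l => (1, (k + l)%N)
  end.

(* Harmonic product of two A-words, computed on REVERSED words
   (head of the list = last letter), following the recursion
   (wu)*(w'v) = (w * w'v)u + (wu * w')v + (w * w')(u o v). *)
Fixpoint harm_rev (s : Aword) : Aword -> Aelt :=
  match s with
  | [::] => fun t => [:: (1, t)]
  | x :: s' =>
      fix harm_t (t : Aword) : Aelt :=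
        match t with
        | [::] => [:: (1, x :: s')]
        | y :: t' =>
            [seq (p.1, x :: p.2) | p <- harm_rev s' (y :: t')]
            ++ [seq (p.1, y :: p.2) | p <- harm_t t']
            ++ [seq (p.1 * (circ x y).1, (circ x y).2 :: p.2) | p <- harm_rev s' t']
        end
  end.

Definition harm (u v : Aword) : Aelt :=
  [seq (p.1, rev p.2) | p <- harm_rev (rev u) (rev v)].

Definition harmE (x y : Aelt) : Aelt :=
  flatten [seq flatten [seq scaleA (p.1 * q.1) (harm p.2 q.2) | q <- y] | p <- x].

(* psi^*: anti-automorphism with psi(hbar b) = hbar b, psi(b a^k) = b(-a)^k = (-1)^k b a^k. *)
Definition psi_word (u : Aword) : C * Aword :=
  ((-1) ^+ (sumn u), rev u).

Definition wS (u : Aword) : Aelt :=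
  flatten [seq scaleA (psi_word (drop i u)).1
                      (harm (take i u) (psi_word (drop i u)).2)
          | i <- iota 0 (size u).+1].

(* Embedding C<A> -> H = C<a,b>.  Words in {a,b}: true = b, false = a. *)
Definition abword := seq bool.
Definition letter_ab (u : letter) : abword := true :: nseq u false.
Definition Aword_ab (u : Aword) : abword := flatten (map letter_ab u).
(* power of hbar carried by an A-word: one per occurrence of hbar b *)
Definition hbar_pow (u : Aword) : nat := count (pred1 0%N) u.

Definition coefH (x : Aelt) (w : abword) : C :=
  \sum_(p <- x | Aword_ab p.2 == w) p.1 * hbar ^+ hbar_pow p.2.

Definition is_index (k : seq nat) : bool := all (fun x => 0 < x)%N k.
Definition admissible (k : seq nat) : bool :=
  is_index k && ((k == [::]) || (1 < last 0%N k)%N).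
Definition g_ab (k : seq nat) : abword := Aword_ab k.

(* Since g_k o g_l = g_(k+l), harmonic products of words in the g_k alone have
   all coefficients 1 and no hbar, and psi^* only contributes the sign
   (-1)^(k_(i+1) + ... + k_r); so w^{S,*}(g_k) is a signed sum of words g_l.
   A word ending in g_1 arises only when g_1 is the last letter of one factor
   of (g_(k_1) ... g_(k_i)) * psi^*(g_(k_(i+1)) ... g_(k_r)): for k_(i+1) = 1
   the splittings at i and i + 1 produce the same words with opposite signs,
   so these contributions cancel in pairs and only admissible g_l survive. *)

From mathcomp Require Import all_boot all_order all_algebra.
Set Implicit Arguments. Unset Strict Implicit. Unset Printing Implicit Defensive.
Import GRing.Theory.
Local Open Scope ring_scope.

Definition coef (x : Aelt) (v : Aword) : C := \sum_(p <- x | p.2 == v) p.1.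

Lemma coef_cat x y v : coef (x ++ y) v = coef x v + coef y v.
Proof. by rewrite /coef big_cat. Qed.

Lemma coef_scale c x v : coef (scaleA c x) v = c * coef x v.
Proof. by rewrite /coef big_map mulr_sumr. Qed.

Lemma coef_flatten xs v : coef (flatten xs) v = \sum_(x <- xs) coef x v.
Proof.
elim: xs => [|x xs IH]; first by rewrite /coef !big_nil.
by rewrite /= coef_cat IH big_cons.
Qed.

Lemma coef_map_cons (f : C -> C) u x v z :
  coef [seq (f p.1, u :: p.2) | p <- x] (v :: z) =
  if u == v then \sum_(p <- x | p.2 == z) f p.1 else 0.
Proof.
rewrite /coef big_map /=; case: eqP => [->|neq_uv].
- by apply: eq_bigl => p; rewrite eqseq_cons eqxx.
- by rewrite big_pred0 // => p; rewrite eqseq_cons; case: eqP.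
Qed.

Lemma harm_rev0s t : harm_rev [::] t = [:: (1, t)].
Proof. by []. Qed.

Lemma harm_revs0 s : harm_rev s [::] = [:: (1, s)].
Proof. by case: s. Qed.

Lemma harm_rev_cons x s y t : harm_rev (x :: s) (y :: t) =
  [seq (p.1, x :: p.2) | p <- harm_rev s (y :: t)]
  ++ [seq (p.1, y :: p.2) | p <- harm_rev (x :: s) t]
  ++ [seq (p.1 * (circ x y).1, (circ x y).2 :: p.2) | p <- harm_rev s t].
Proof. by []. Qed.

Lemma circ_gt0 x y : (0 < x)%N -> (0 < y)%N -> circ x y = (1, (x + y)%N).
Proof. by case: x => // x; case: y. Qed.

Lemma is_index_cons x s : is_index (x :: s) = (0 < x)%N && is_index s.
Proof. by []. Qed.

Lemma harm_rev_unit_index s t : is_index s -> is_index t ->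
  all (fun p => (p.1 == 1) && is_index p.2) (harm_rev s t).
Proof.
elim: s t => [|x s IHs] t; first by rewrite harm_rev0s /= eqxx => _ ->.
elim: t => [|y t IHt]; first by rewrite harm_revs0 /= eqxx => -> _.
move=> ixs iyt; move: (ixs) (iyt); rewrite !is_index_cons.
move=> /andP [x_gt0 i_s] /andP [y_gt0 i_t].
rewrite harm_rev_cons (circ_gt0 x_gt0 y_gt0) !all_cat !all_map.
apply/and3P; split; apply/allP => p /=.
- by move=> /(allP (IHs _ i_s iyt)) /andP [-> ->]; rewrite x_gt0.
- by move=> /(allP (IHt ixs i_t)) /andP [-> ->]; rewrite y_gt0.
- move=> /(allP (IHs _ i_s i_t)) /andP [/eqP -> ->].
  by rewrite mulr1 eqxx addn_gt0 x_gt0.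
Qed.

(* Letters combined by [circ] have sum at least 2, so a final letter [g_1]
   is the final letter of one of the two factors. *)
Lemma coef_harm_rev_one s t z : is_index s -> is_index t ->
  coef (harm_rev s t) (1%N :: z) =
  (if s is 1%N :: s' then coef (harm_rev s' t) z else 0) +
  (if t is 1%N :: t' then coef (harm_rev s t') z else 0).
Proof.
case: s => [|x s]; case: t => [|y t].
- by rewrite harm_rev0s /coef big_cons big_nil add0r.
- move=> _ _; rewrite harm_rev0s add0r /coef !big_cons !big_nil /= eqseq_cons.
  by case: y => [|[|y]].
- move=> _ _; rewrite harm_revs0 addr0 /coef !big_cons !big_nil /= eqseq_cons.
  by case: x => [|[|x]] //=; rewrite harm_revs0 big_cons big_nil addr0.
rewrite !is_index_cons => /andP [x_gt0 _] /andP [y_gt0 _].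
rewrite harm_rev_cons (circ_gt0 x_gt0 y_gt0) !coef_cat.
rewrite (coef_map_cons id) (coef_map_cons id) (coef_map_cons (fun c => c * 1)).
have -> : ((x + y)%N == 1%N) = false.
  by case: x x_gt0 => // x _; case: y y_gt0 => // y _; rewrite addSn addnS.
by rewrite addr0; case: x {x_gt0} => [|[|x]]; case: y {y_gt0} => [|[|y]].
Qed.

Lemma coef_harm u w v : coef (harm u w) v = coef (harm_rev (rev u) (rev w)) (rev v).
Proof.
rewrite /coef /harm big_map /=; apply: eq_bigl => p /=.
by rewrite -{1}(revK v) (can_eq (@revK _)).
Qed.

Lemma coef_wS k v : coef (wS k) v =
  \sum_(i <- iota 0 (size k).+1)
     (-1) ^+ sumn (drop i k) * coef (harm_rev (rev (take i k)) (drop i k)) (rev v).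
Proof.
rewrite /wS coef_flatten big_map; apply: eq_bigr => i _.
by rewrite coef_scale coef_harm /psi_word /= revK.
Qed.

(* The splittings at [i] and [i + 1] of [q] both produce the final letter
   [g_1 = q_(i+1)], once from each factor, with opposite signs (-1)^(q_(i+1)). *)
Lemma telescope_coef_one q a z : is_index q -> is_index a ->
  \sum_(i <- iota 0 (size q).+1)
    (-1) ^+ sumn (drop i q) * coef (harm_rev (rev (take i q) ++ a) (drop i q)) (1%N :: z)
  = (-1) ^+ sumn q * (if a is 1%N :: a' then coef (harm_rev a' q) z else 0).
Proof.
elim: q a => [|y q IH] a iq ia.
  by rewrite /= big_cons big_nil coef_harm_rev_one // !addr0.
have iotaS n : iota 0 n.+1 = 0%N :: map succn (iota 0 n).
  by rewrite /= (iotaDl 1 0); congr (_ :: _); apply: eq_map.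
rewrite [size _]/= iotaS big_cons big_map.
under eq_bigr do rewrite /= rev_cons cat_rcons.
move: iq; rewrite is_index_cons => /andP [y_gt0 iq].
rewrite IH ?is_index_cons ?y_gt0 // coef_harm_rev_one ?is_index_cons ?y_gt0 //=.
rewrite mulrDr -addrA -[RHS]addr0; congr (_ + _).
case: y y_gt0 => [|[|y]] _ //; last by rewrite !mulr0 addr0.
by rewrite add1n exprS mulN1r mulNr addNr.
Qed.

Lemma coef_wS_rcons1 k z : is_index k -> coef (wS k) (rcons z 1%N) = 0.
Proof.
move=> ik; rewrite coef_wS rev_rcons.
rewrite -[RHS](mulr0 ((-1) ^+ sumn k)) -(telescope_coef_one (rev z) ik (isT : is_index [::])).
by apply: eq_bigr => i _; rewrite cats0.
Qed.

Lemma is_index_rev u : is_index (rev u) = is_index u.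
Proof. exact: all_rev. Qed.

Lemma wS_sign_index k : is_index k ->
  all (fun p => ((p.1 == 1) || (p.1 == -1)) && is_index p.2) (wS k).
Proof.
move=> ik; apply/allP => p /flatten_mapP [i _].
rewrite /psi_word /= => /mapP [q + ->] /=.
rewrite /harm revK => /mapP [r r_in ->] /=.
have itake : is_index (take i k) by apply/allP => n /mem_take /(allP ik).
have idrop : is_index (drop i k) by apply/allP => n /mem_drop /(allP ik).
have /andP [/eqP -> ir] :=
  allP (harm_rev_unit_index (etrans (is_index_rev _) itake) idrop) r r_in.
rewrite is_index_rev ir andbT mulr1 -signr_odd.
by case: (odd _); rewrite ?expr1 ?expr0 eqxx ?orbT.
Qed.

Lemma not_admissible_index v : is_index v -> ~~ admissible v -> exists z, v = rcons z 1%N.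
Proof.
case/lastP: v => [|z n] // iv; rewrite /admissible iv /= last_rcons.
have -> : (rcons z n == [::]) = false by case: z {iv}.
move: iv; rewrite /is_index all_rcons => /andP [n_gt0 _].
by case: n n_gt0 => [|[|n]] // _ _; exists z.
Qed.

Lemma nseq_false_cat_inj m n (X Y : abword) : head true X -> head true Y ->
  nseq m false ++ X = nseq n false ++ Y -> m = n /\ X = Y.
Proof.
elim: m n => [|m IH] [|n] //= hX hY.
- by move=> eXY; rewrite eXY in hX.
- by move=> eXY; rewrite -eXY in hY.
- by move=> [] /(IH _ hX hY) [-> ->].
Qed.

Lemma Aword_ab_inj : injective Aword_ab.
Proof.
have head_ab (u : Aword) : head true (Aword_ab u) by case: u.
elim=> [|x u IH] [|y v] //= [].
by move=> /(nseq_false_cat_inj (head_ab u) (head_ab v)) [-> /IH ->].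
Qed.

Lemma hbar_pow_index u : is_index u -> hbar_pow u = 0%N.
Proof.
move=> iu; apply/eqP; rewrite /hbar_pow -leqn0 leqNgt -has_count.
by apply/hasPn => n /(allP iu); case: n.
Qed.

Lemma coefH_index x w : all (fun p => is_index p.2) x ->
  coefH x w = \sum_(p <- x | Aword_ab p.2 == w) p.1.
Proof.
move=> ix; rewrite /coefH big_seq_cond [RHS]big_seq_cond.
by apply: eq_bigr => p /andP [/(allP ix) ip _]; rewrite hbar_pow_index // mulr1.
Qed.

(* By injectivity of [Aword_ab], at most one word has image [w]. *)
Lemma coef_not_admissible x w :
  all (fun p => is_index p.2) x -> (forall z, coef x (rcons z 1%N) = 0) ->
  \sum_(p <- x | (Aword_ab p.2 == w) && ~~ admissible p.2) p.1 = 0.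
Proof.
move=> ix coef1.
have [/hasP [p0 p0_in /andP [/eqP <- na_p0]]|no_p] :=
  boolP (has (fun p => (Aword_ab p.2 == w) && ~~ admissible p.2) x); last first.
  by rewrite big_hasC.
have [z p0_eq] := not_admissible_index (allP ix p0 p0_in) na_p0.
rewrite -[RHS](coef1 z) /coef; apply: eq_bigl => p.
rewrite (inj_eq Aword_ab_inj) -p0_eq.
by case: eqP => [->|]; rewrite ?na_p0.
Qed.

Definition sign_int (c : C) : int := if c == 1 then 1 else -1.

Lemma m1_neq1 : ((-1 : C) == 1) = false.
Proof. by apply/eqP => /(congr1 (fun q : C => q`_0)); rewrite coefN coef1. Qed.

Lemma sign_intK c : (c == 1) || (c == -1) -> (sign_int c)%:~R = c.
Proof. by rewrite /sign_int => /orP [] /eqP ->; rewrite ?eqxx ?m1_neq1. Qed.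

Theorem proposition5p1 (k : seq nat) :
  is_index k ->
  exists s : seq (int * seq nat),
    all (fun p => admissible p.2) s /\
    forall w : abword,
      coefH (wS k) w = \sum_(p <- s | g_ab p.2 == w) ((p.1)%:~R : C).
Proof.
move=> ik; have sign_index := wS_sign_index ik.
have index : all (fun p => is_index p.2) (wS k).
  by apply: sub_all sign_index => p /andP [].
exists [seq (sign_int p.1, p.2) | p <- wS k & admissible p.2]; split.
  by apply/allP => p /mapP [q]; rewrite mem_filter => /andP [aq _] ->.
move=> w; rewrite coefH_index // (bigID (fun p => admissible p.2)) /=.
rewrite coef_not_admissible // => [|z]; last exact: coef_wS_rcons1.
rewrite addr0 big_map big_filter_cond big_seq_cond [RHS]big_seq_cond.
apply: eq_big => [p|p /andP [p_in _]] /=; first by rewrite (andbC (admissible _)).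
by have /andP [sp _] := allP sign_index p p_in; rewrite sign_intK.
Qed.
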